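(* Let $r=r(n)\ge3$ and $m=m(n)$ be integers with $r^{-2}n\le m=o(r^{-3}n^{3/2})$, and let $M_0^*=\bigl\lceil\log(r^{-2}n)+\frac{3^4r^2m}{n}\bigr\rceil$. Then, as $n\to\infty$, the number of hypergraphs in $\mathcal{L}_r(n,m)$ in which every vertex has degree at most $M_0^*$ equals $\bigl(1-O(r^6/n^3)\bigr)|\mathcal{L}_r(n,m)|$.
   Context: An $r$-graph on $[n]$ is a set of $r$-subsets of $[n]$ (edges); it is linear if any two distinct edges share at most one vertex. $\mathcal{L}_r(n,m)$ is the set of linear $r$-graphs on $[n]$ with exactly $m$ edges. The degree of a vertex is the number of edges containing it. $\log$ is the natural logarithm. *)

From mathcomp Require Import all_boot.
From Stdlib Require Import Reals ZArith.

Set Implicit Arguments.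
Unset Strict Implicit.
Unset Printing Implicit Defensive.

Definition is_rgraph (n r : nat) (H : {set {set 'I_n}}) : bool :=
  [forall e in H, #|e| == r].

Definition is_linear (n : nat) (H : {set {set 'I_n}}) : bool :=
  [forall e in H, forall f in H, (e != f) ==> (#|e :&: f| <= 1)].

Definition Lr (n r m : nat) : {set {set {set 'I_n}}} :=
  [set H : {set {set 'I_n}} | [&& is_rgraph r H, is_linear H & #|H| == m]].

Definition deg (n : nat) (H : {set {set 'I_n}}) (v : 'I_n) : nat :=
  #|[set e in H | v \in e]|.

(* ceiling of a real number: up y - 1 = floor y, ceil x = - floor (- x) *)
Definition Rceil (x : R) : Z := (- (up (- x) - 1))%Z.

Definition M0star (n r m : nat) : Z :=
  Rceil (ln (INR n / (INR r ^ 2)) + 3 ^ 4 * (INR r ^ 2) * INR m / INR n)%R.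

Definition Lr_good (n r m : nat) : {set {set {set 'I_n}}} :=
  [set H in Lr n r m | [forall v : 'I_n, (Z.of_nat (deg H v) <=? M0star n r m)%Z]].

From mathcomp Require Import all_boot zify.
From Stdlib Require Import Reals ZArith Lra Factorial Rpower.

Set Implicit Arguments.
Unset Strict Implicit.
Unset Printing Implicit Defensive.

(* Fix a vertex v and let B_j be the hypergraphs of L_r(n,m) in which v has
   degree at least j.  A switching replaces an edge through v by an r-set
   avoiding v that meets every other edge in at most one vertex.  Double
   counting the switchings from B_(j+1) to B_j (Section Switching) gives
   (j+1) |B_(j+1)| <= lam |B_j| with lam = (3/2) m r / n, since only few
   r-sets clash with the existing edges.  Hence |B_k| <= lam^k / k! |L_r(n,m)|,
   and with k = M_0^* + 1 >= max(log(n / r^2), 81 r^2 m / n) the crude bound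
   k! >= (k/e)^k turns this into |B_k| <= 9 r^6 / n^4 |L_r(n,m)|.  A union
   bound over the n vertices proves the theorem with constant 9. *)

Lemma card_bigcup_leq (I T : finType) (P : pred I) (F : I -> {set T}) :
  #|\bigcup_(i | P i) F i| <= \sum_(i | P i) #|F i|.
Proof.
elim/big_rec2: _ => [|i A s _ IH]; first by rewrite cards0.
exact: leq_trans (leq_card_setU _ _) (leq_add _ IH).
Qed.

Lemma card_pairs (A B : finType) (F : {set A * B}) :
  #|F| = \sum_a #|[set b | (a, b) \in F]|.
Proof.
pose G (a : A) (b : B) := nat_of_bool ((a, b) \in F).
have -> : \sum_a #|[set b | (a, b) \in F]| = \sum_a \sum_b G a b.
  apply: eq_bigr => a _; rewrite -sum1_card big_mkcond.
  by apply: eq_bigr => b _; rewrite inE.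
by rewrite (pair_bigA _ G) -sum1_card big_mkcond; apply: eq_bigr => -[a b].
Qed.

Lemma card_triples (A B C : finType) (F : {set A * B * C}) :
  #|F| = \sum_a \sum_b #|[set c | ((a, b), c) \in F]|.
Proof.
rewrite card_pairs (pair_bigA _ (fun a b => #|[set c | ((a, b), c) \in F]|)).
by apply: eq_bigr => -[a b].
Qed.

Lemma in_LrE n r m (H : {set {set 'I_n}}) :
  H \in Lr n r m <->
  [/\ forall e, e \in H -> #|e| = r,
      forall e f, e \in H -> f \in H -> e != f -> #|e :&: f| <= 1
    & #|H| = m].
Proof.
rewrite inE; split.
  case/and3P => /forallP hr /forallP hl /eqP hm; split=> //.
    by move=> e eH; apply/eqP; move: (hr e); rewrite eH.
  by move=> e f eH fH nef; move: (hl e); rewrite eH => /forallP/(_ f); rewrite fH nef.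
case=> hr hl hm; apply/and3P; split; last by rewrite hm.
  by apply/forallP => e; apply/implyP => /hr ->.
apply/forallP => e; apply/implyP => eH; apply/forallP => f; apply/implyP => fH.
by apply/implyP; apply: hl.
Qed.

Lemma Lr_good_sub (n r m : nat) : Lr_good n r m \subset Lr n r m.
Proof. by apply/subsetP => H; rewrite inE => /andP []. Qed.

Section Switching.

Variables (n r m : nat) (v : 'I_n).
Hypothesis r_gt1 : 1 < r.

Definition deg_at_least (j : nat) : {set {set {set 'I_n}}} :=
  [set H in Lr n r m | j <= deg H v].

Definition rsets_avoiding : {set {set 'I_n}} :=
  [set f : {set 'I_n} | (#|f| == r) && (v \notin f)].
Definition rsets_through : {set {set 'I_n}} :=
  [set f : {set 'I_n} | (#|f| == r) && (v \in f)].

(* The r-sets f avoiding v that may replace the edge e of H: H - e + f stays linear. *)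
Definition switch_targets (H : {set {set 'I_n}}) (e : {set 'I_n}) : {set {set 'I_n}} :=
  [set f : {set 'I_n} | [&& #|f| == r, v \notin f & [forall g in H :\ e, #|f :&: g| <= 1]]].

(* A switch target is never an edge of H - e, since it meets itself in r > 1 points. *)
Lemma switch_target_new (H : {set {set 'I_n}}) (e f : {set 'I_n}) :
  f \in switch_targets H e -> f \notin H :\ e.
Proof.
rewrite inE => /and3P [/eqP fr _ /forallP hf]; apply: contraTN isT => fH.
by move: (hf f); rewrite fH setIid fr leqNgt r_gt1.
Qed.

Lemma switch_step j (H : {set {set 'I_n}}) (e f : {set 'I_n}) :
  H \in deg_at_least j.+1 -> e \in H -> v \in e -> f \in switch_targets H e ->
  (f |: (H :\ e)) \in deg_at_least j.
Proof.
rewrite inE => /andP [/in_LrE [hr hl hm] dj] eH ve fT.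
have fn := switch_target_new fT.
move: fT; rewrite inE => /and3P [/eqP fr vf /forallP hf].
rewrite inE; apply/andP; split.
  apply/in_LrE; split.
  - by move=> g /setU1P [->|/setD1P [_ /hr]].
  - move=> g1 g2 /setU1P [->|g1H] /setU1P [->|g2H].
    + by rewrite eqxx.
    + by move=> _; move: (hf g2); rewrite g2H.
    + by move=> _; rewrite setIC; move: (hf g1); rewrite g1H.
    + by move: g1H g2H => /setD1P [_ g1H] /setD1P [_ g2H]; apply: hl.
  - by rewrite cardsU1 fn -hm (cardsD1 e H) eH.
rewrite -ltnS; apply: leq_trans dj _; rewrite /deg.
have sub : [set g in H | v \in g] \subset e |: [set g in f |: (H :\ e) | v \in g].
  apply/subsetP => g; rewrite !inE => /andP [gH vg].
  by case: (g =P e) => //= ne; rewrite vg gH andbT orbT.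
apply: leq_trans (subset_leq_card sub) _.
by rewrite cardsU1 -add1n leq_add2r leq_b1.
Qed.

(* Double counting of switchings: each H in B_(j+1) admits at least (j+1) * G
   switchings, which land injectively among the triples (H', f, e) with
   H' in B_j, f an edge of H' and e an r-set through v. *)
Lemma switch_count j G :
  (forall H e, H \in Lr n r m -> e \in H -> G <= #|switch_targets H e|) ->
  #|deg_at_least j.+1| * j.+1 * G <= #|deg_at_least j| * m * #|rsets_through|.
Proof.
move=> hG.
pose S := [set x : {set {set 'I_n}} * {set 'I_n} * {set 'I_n} |
  [&& x.1.1 \in deg_at_least j.+1, x.1.2 \in x.1.1, v \in x.1.2
    & x.2 \in switch_targets x.1.1 x.1.2]].
pose T := [set y : {set {set 'I_n}} * {set 'I_n} * {set 'I_n} |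
  [&& y.1.1 \in deg_at_least j, y.1.2 \in y.1.1 & y.2 \in rsets_through]].
pose switch (x : {set {set 'I_n}} * {set 'I_n} * {set 'I_n}) :=
  (x.2 |: (x.1.1 :\ x.1.2), x.2, x.1.2).
have switchK : {in S, cancel switch switch}.
  move=> [[H e] f]; rewrite inE /= => /and4P [_ eH _ fT].
  by rewrite /switch /= setU1K ?switch_target_new // setD1K ?setU11.
have switchS : {subset switch @: S <= T}.
  move=> _ /imsetP [[[H e] f] xS ->]; move: (xS); rewrite inE /= => /and4P [HB eH ve fT].
  rewrite inE /= switch_step // setU11 /= inE ve andbT.
  by move: HB; rewrite inE => /andP [/in_LrE [hr _ _] _]; rewrite hr.
have S_le_T : #|S| <= #|T|.
  rewrite -(card_in_imset (can_in_inj switchK)); exact/subset_leq_card/subsetP.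
have S_ge : #|deg_at_least j.+1| * j.+1 * G <= #|S|.
  rewrite card_triples -mulnA -sum_nat_const big_mkcond /=; apply: leq_sum => H _.
  case: ifP => // HB; move: (HB); rewrite inE => /andP [HL dj].
  apply: (@leq_trans (\sum_(e in [set g in H | v \in g]) G)).
    by rewrite sum_nat_const leq_mul2r dj orbT.
  apply: (@leq_trans (\sum_(e in [set g in H | v \in g]) #|[set f | (H, e, f) \in S]|)).
    apply: leq_sum => e; rewrite inE => /andP [eH ve].
    apply: leq_trans (hG H e HL eH) _; apply: subset_leq_card; apply/subsetP => f fT.
    by rewrite inE /S inE /= HB eH ve.
  by rewrite [X in X <= _]big_mkcond /=; apply: leq_sum => e _; case: ifP.
have T_eq : #|T| = #|deg_at_least j| * m * #|rsets_through|.
  rewrite card_triples -mulnA -sum_nat_const [RHS]big_mkcond /=; apply: eq_bigr => H _.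
  case: ifP => HB; last first.
    by rewrite big1 // => e _; apply: eq_card0 => f; rewrite inE /T inE /= HB.
  move: (HB); rewrite inE => /andP [/in_LrE [_ _ hm] _].
  rewrite -hm -sum_nat_const [RHS]big_mkcond /=; apply: eq_bigr => e _.
  case: ifP => eH; last by apply: eq_card0 => f; rewrite inE /T inE /= HB eH.
  by apply: eq_card => f; rewrite inE /T inE /= HB eH.
by apply: leq_trans S_ge (leq_trans S_le_T _); rewrite T_eq.
Qed.

Lemma card_rsets_avoiding : #|rsets_avoiding| = 'C(n.-1, r).
Proof.
have -> : n.-1 = #|[set~ v]| by rewrite cardsC1 card_ord.
rewrite -cards_draws; apply: eq_card => f; rewrite !inE andbC; congr (_ && _).
apply/negP/subsetP => [vf x xf | sub vf]; last by move: (sub v vf); rewrite !inE eqxx.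
by rewrite !inE; apply/eqP => xv; apply: vf; rewrite -xv.
Qed.

(* Pascal's rule: the r-sets through v number C(n-1, r-1). *)
Lemma card_rsets_through : 0 < n -> 0 < r -> #|rsets_through| = 'C(n.-1, r.-1).
Proof.
move=> n_gt0 r_gt0.
have split : #|rsets_avoiding| + #|rsets_through| = 'C(n, r).
  rewrite -[in RHS](card_ord n) -card_draws addnC.
  rewrite -(cardsID [set f : {set 'I_n} | v \in f] [set A : {set 'I_n} | #|A| == r]).
  by congr (_ + _); apply: eq_card => f; rewrite !inE andbC.
have pascal : 'C(n, r) = 'C(n.-1, r) + 'C(n.-1, r.-1).
  by move: n_gt0 r_gt0; clear; case: n => // a _; case: r.
by apply/eqP; rewrite -(eqn_add2l 'C(n.-1, r)) -pascal -card_rsets_avoiding split.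
Qed.

Definition rsets_clashing (g : {set 'I_n}) : {set {set 'I_n}} :=
  [set f : {set 'I_n} | (#|f| == r) && (1 < #|f :&: g|)].

Lemma card_rsets_containing_pair (P : {set 'I_n}) : #|P| = 2 ->
  #|[set f : {set 'I_n} | (#|f| == r) && (P \subset f)]| <= 'C(n - 2, r - 2).
Proof.
move=> P2; have -> : n - 2 = #|~: P| by rewrite cardsCs setCK card_ord P2.
rewrite -cards_draws -(@card_in_imset _ _ (fun f => f :\: P)).
  apply: subset_leq_card; apply/subsetP => A /imsetP [f].
  rewrite inE => /andP [/eqP fr Pf] ->; rewrite inE cardsD fr (setIidPr Pf) P2 eqxx andbT.
  by apply/subsetP => x; rewrite !inE => /andP [].
move=> f1 f2; rewrite !inE => /andP [_ /setIidPr P1] /andP [_ /setIidPr P2'] e12.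
by rewrite -(setID f1 P) -(setID f2 P) P1 P2' e12.
Qed.

(* An r-set clashing with g contains one of the C(r, 2) pairs inside g. *)
Lemma card_rsets_clashing (g : {set 'I_n}) :
  #|g| = r -> #|rsets_clashing g| <= 'C(r, 2) * 'C(n - 2, r - 2).
Proof.
move=> gr.
pose pairs := [set P : {set 'I_n} | P \subset g & #|P| == 2].
have sub : rsets_clashing g \subset
    \bigcup_(P in pairs) [set f : {set 'I_n} | (#|f| == r) && (P \subset f)].
  apply/subsetP => f; rewrite inE => /andP [fr /card_gt1P [x [y]]].
  rewrite !inE => -[/andP [xf xg] /andP [yf yg] xy]; apply/bigcupP; exists [set x; y].
    by rewrite inE cards2 xy subUset !sub1set xg yg.
  by rewrite inE fr subUset !sub1set xf yf.
apply: leq_trans (subset_leq_card sub) (leq_trans (card_bigcup_leq _ _) _).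
have -> : 'C(r, 2) = #|pairs| by rewrite cards_draws gr.
rewrite -sum_nat_const; apply: leq_sum => P.
by rewrite inE => /andP [_ /eqP /card_rsets_containing_pair].
Qed.

(* Few r-sets avoiding v fail to be switch targets: each such r-set clashes
   with one of the m edges of H. *)
Lemma card_switch_targets (H : {set {set 'I_n}}) (e : {set 'I_n}) :
  H \in Lr n r m ->
  #|rsets_avoiding| - m * ('C(r, 2) * 'C(n - 2, r - 2)) <= #|switch_targets H e|.
Proof.
move=> /in_LrE [hr _ hm].
have sub : rsets_avoiding :\: \bigcup_(g in H) rsets_clashing g \subset switch_targets H e.
  apply/subsetP => f; rewrite !inE => /andP [nclash /andP [fr vf]].
  rewrite fr vf; apply/forallP => g; apply/implyP => /setD1P [_ gH].
  rewrite leqNgt; apply: contraNN nclash => clash.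
  by apply/bigcupP; exists g => //; rewrite inE fr.
apply: leq_trans (subset_leq_card sub); rewrite cardsD leq_sub2l //.
apply: leq_trans (subset_leq_card (subsetIr _ _)) (leq_trans (card_bigcup_leq _ _) _).
by rewrite -hm -sum_nat_const; apply: leq_sum => g /hr /card_rsets_clashing.
Qed.

End Switching.

Lemma bin_through_ratio n r : 0 < r <= n ->
  r * 'C(n.-1, r) = (n - r) * 'C(n.-1, r.-1).
Proof. by case: r => // r; case: n => // n /= _; rewrite mul_bin_left subSS. Qed.

Lemma bin_pair_ratio n r : 1 < r <= n ->
  n.-1 * (n - r) * 'C(n - 2, r - 2) = r.-1 * r * 'C(n.-1, r).
Proof.
case: r => [|[|r]] //; case: n => [|[|n]] // _; rewrite !subSS !subn0 /=.
by rewrite -mulnA -mul_bin_left mulnCA (mul_bin_diag n.+1 r.+1) mulnA.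
Qed.

Lemma bin2_double r : 2 * 'C(r, 2) = r.-1 * r.
Proof. by case: r => // r; rewrite (mul_bin_left r.+1 1) bin1 subn1. Qed.

(* Union bound: a hypergraph outside Lr_good has a vertex of degree at least
   M_0^* + 1. *)
Lemma card_not_good_le (n r m : nat) : (0 <= M0star n r m)%Z ->
  #|Lr n r m| - #|Lr_good n r m|
    <= \sum_(v : 'I_n) #|deg_at_least r m v (Z.to_nat (M0star n r m)).+1|.
Proof.
move=> M0_ge0; rewrite -(setIidPr (Lr_good_sub n r m)) -cardsD.
apply: leq_trans (card_bigcup_leq _ _).
apply/subset_leq_card/subsetP => H /setDP [HL not_good].
rewrite inE HL /= in not_good; have [v high] := forallPn not_good.
apply/bigcupP; exists v => //; rewrite inE HL /=.
move/negbTE/Z.leb_gt: high => high; apply/ltP; lia.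
Qed.

Open Scope R_scope.

Lemma INR_subn (a b : nat) : (b <= a)%nat -> INR (a - b) = INR a - INR b.
Proof. by move=> le_ba; rewrite -minusE minus_INR //; apply/leP. Qed.

Lemma INR_muln (a b : nat) : INR (a * b) = INR a * INR b.
Proof. by rewrite -multE mult_INR. Qed.

Lemma exp_pow (x : R) (k : nat) : exp x ^ k = exp (INR k * x).
Proof. by rewrite -Rpower_pow; [rewrite /Rpower ln_exp | apply: exp_pos]. Qed.

(* Euler's number is at most 11/4: exp (1/50) <= 50/49 since exp (-1/50) >= 49/50. *)
Lemma exp1_le : exp 1 <= 11 / 4.
Proof.
have lower : 49 / 50 <= exp (- (1 / 50)) by have := exp_ineq1_le (- (1 / 50)); lra.
have inv : exp (1 / 50) * exp (- (1 / 50)) = 1 by rewrite -exp_plus Rplus_opp_r exp_0.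
have upper : exp (1 / 50) <= 50 / 49 by have := exp_pos (1 / 50); nra.
have -> : exp 1 = exp (1 / 50) ^ 50 by rewrite exp_pow; f_equal; simpl; lra.
apply: Rle_trans (pow_incr _ _ 50 (conj (Rlt_le _ _ (exp_pos _)) upper)) _; lra.
Qed.

(* (k + 1)^k <= e k^k, i.e. (1 + 1/k)^k <= e. *)
Lemma succ_pow_le (k : nat) : (INR k + 1) ^ k <= exp 1 * INR k ^ k.
Proof.
case: k => [|k]; first by have := exp_ineq1_le 1; rewrite /=; lra.
set K := INR k.+1; have K_gt0 : 0 < K by apply: lt_0_INR; lia.
have -> : K + 1 = K * (1 + / K) by field; lra.
rewrite Rpow_mult_distr Rmult_comm; apply: Rmult_le_compat_r; first by apply: pow_le; lra.
have -> : exp 1 = exp (/ K) ^ k.+1 by rewrite exp_pow -/K Rinv_r //; lra.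
apply: pow_incr; split; last exact: exp_ineq1_le.
by have := Rinv_0_lt_compat _ K_gt0; lra.
Qed.

Lemma pow_self_le_fact (k : nat) : INR k ^ k <= exp (INR k) * INR (fact k).
Proof.
elim: k => [|k IH]; first by rewrite /= exp_0; lra.
have -> : INR (fact k.+1) = (INR k + 1) * INR (fact k) by rewrite -S_INR -mult_INR.
rewrite S_INR exp_plus [_ ^ _.+1]/=.
have step := succ_pow_le k.
have k_ge0 := pos_INR k.
have e_gt0 := exp_pos 1.
apply: Rle_trans (_ : (INR k + 1) * (exp 1 * INR k ^ k) <= _).
  by apply: Rmult_le_compat_l; lra.
have : exp 1 * INR k ^ k <= exp 1 * (exp (INR k) * INR (fact k)).
  by apply: Rmult_le_compat_l; lra.
nra.
Qed.

Lemma pow_div_fact_le (lam : R) (k : nat) : 0 <= lam -> (0 < k)%nat ->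
  lam ^ k / INR (fact k) <= (exp 1 * lam / INR k) ^ k.
Proof.
move=> lam_ge0 k_gt0.
have K_gt0 : 0 < INR k by apply: lt_0_INR; lia.
have F_gt0 : 0 < INR (fact k) := INR_fact_lt_0 k.
have Kk_gt0 : 0 < INR k ^ k by apply: pow_lt.
have stirling := pow_self_le_fact k.
rewrite (_ : exp (INR k) = exp 1 ^ k) in stirling; last by rewrite exp_pow Rmult_1_r.
rewrite /Rdiv !Rpow_mult_distr pow_inv.
apply: (Rmult_le_reg_r (INR k ^ k * INR (fact k))); first exact: Rmult_lt_0_compat.
have -> : lam ^ k * / INR (fact k) * (INR k ^ k * INR (fact k)) = lam ^ k * INR k ^ k.
  by field; lra.
have -> : exp 1 ^ k * lam ^ k * / INR k ^ k * (INR k ^ k * INR (fact k))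
    = lam ^ k * (exp 1 ^ k * INR (fact k)) by field; lra.
by apply: Rmult_le_compat_l => //; apply: pow_le.
Qed.

Lemma factorial_decay (b : nat -> R) (lam : R) : 0 <= lam ->
  (forall j, b j.+1 * INR j.+1 <= lam * b j) ->
  forall k, b k <= lam ^ k / INR (fact k) * b 0%nat.
Proof.
move=> lam_ge0 step; elim=> [|k IH]; first by rewrite /= Rdiv_1_r Rmult_1_l; lra.
have K_gt0 : 0 < INR k.+1 by apply: lt_0_INR; lia.
have F_gt0 : 0 < INR (fact k) := INR_fact_lt_0 k.
have -> : INR (fact k.+1) = INR k.+1 * INR (fact k) by rewrite -mult_INR.
apply: (Rmult_le_reg_r (INR k.+1)) => //; apply: Rle_trans (step k) _.
have -> : lam ^ k.+1 / (INR k.+1 * INR (fact k)) * b 0%nat * INR k.+1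
    = lam * (lam ^ k / INR (fact k) * b 0%nat) by rewrite [lam ^ _]/=; field; lra.
exact: Rmult_le_compat_l.
Qed.

Lemma poisson_tail (lam R y : R) (k : nat) : 0 <= lam -> 3 <= R -> 100 <= y ->
  y <= exp (INR k) -> 54 * R * lam <= INR k ->
  lam ^ k / INR (fact k) <= 9 / (y ^ 4 * R ^ 2).
Proof.
move=> lam_ge0 R_ge3 y_ge100 y_le k_ge.
have e_le := exp1_le; have e_gt0 := exp_pos 1.
have k_ge2 : (2 <= k)%nat.
  case: k y_le {k_ge} => [|[|k]] //=; first by rewrite exp_0; lra.
  by lra.
have K_gt0 : 0 < INR k by apply: lt_0_INR; lia.
have ratio : exp 1 * lam / INR k <= 11 / 216 / R.
  apply: (Rmult_le_reg_r (INR k * R)); first by apply: Rmult_lt_0_compat; lra.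
  have -> : exp 1 * lam / INR k * (INR k * R) = exp 1 * (R * lam) by field; lra.
  have -> : 11 / 216 / R * (INR k * R) = 11 / 216 * INR k by field; lra.
  by apply: Rle_trans (_ : 11 / 4 * (R * lam) <= _); [apply: Rmult_le_compat_r|]; nra.
have e4_le : exp 4 <= 648 / 11.
  have -> : exp 4 = exp 1 ^ 4 by rewrite exp_pow; f_equal; simpl; ring.
  by apply: Rle_trans (pow_incr _ _ 4 (conj (Rlt_le _ _ e_gt0) e_le)) _; lra.
have y4 : y ^ 4 <= exp 4 ^ k.
  have -> : exp 4 ^ k = exp (INR k) ^ 4 by rewrite !exp_pow; f_equal; simpl; ring.
  by apply: pow_incr; lra.
have R2 : (R / 3) ^ 2 <= (R / 3) ^ k by apply: Rle_pow; [lra | exact/leP].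
have big : y ^ 4 * (R / 3) ^ 2 <= (216 / 11 * R) ^ k.
  have -> : 216 / 11 * R = 648 / 11 * (R / 3) by field.
  rewrite Rpow_mult_distr.
  apply: Rmult_le_compat; [apply: pow_le; lra | apply: pow_le; lra | | exact: R2].
  by apply: Rle_trans y4 _; apply: pow_incr; have := exp_pos 4; lra.
apply: Rle_trans (pow_div_fact_le lam_ge0 (ltnW k_ge2)) _.
apply: Rle_trans (pow_incr _ _ _ (conj _ ratio)) _.
  by apply: Rmult_le_pos; [nra | apply: Rlt_le; apply: Rinv_0_lt_compat].
have y4R2_gt0 : 0 < y ^ 4 * (R / 3) ^ 2 by apply: Rmult_lt_0_compat; apply: pow_lt; lra.
have -> : 11 / 216 / R = / (216 / 11 * R) by field; lra.
rewrite pow_inv; apply: Rle_trans (Rinv_le_contravar _ _ y4R2_gt0 big) _.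
by right; field; lra.
Qed.

Lemma sparse_regime (Rn R M : R) : 1 <= Rn -> 3 <= R -> Rn / R ^ 2 <= M ->
  M * R ^ 3 / sqrt Rn ^ 3 < 1 / 10 -> 100 * R ^ 2 < Rn /\ 100 * (M * R ^ 4) < Rn ^ 2.
Proof.
move=> Rn_ge1 R_ge3 low up.
set s := sqrt Rn in up; have s_gt0 : 0 < s by apply: sqrt_lt_R0; lra.
have s2 : s * s = Rn by apply: sqrt_sqrt; lra.
have s3_gt0 : 0 < s ^ 3 by apply: pow_lt.
have R2_gt0 : 0 < R ^ 2 by nra.
have low' : Rn <= M * R ^ 2.
  have := Rmult_le_compat_r _ _ _ (Rlt_le _ _ R2_gt0) low.
  by rewrite /Rdiv Rmult_assoc Rinv_l; lra.
have up' : 10 * (M * R ^ 3) < s ^ 3.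
  by have := Rmult_lt_compat_r _ _ _ s3_gt0 up; rewrite /Rdiv Rmult_assoc Rinv_l; lra.
have R_small : 10 * R < s.
  have : s * s * R <= M * R ^ 3 by rewrite s2 /=; nra.
  simpl in up'; nra.
split; first by rewrite -s2 /=; nra.
rewrite -s2; have : 10 * (M * R ^ 3) * (10 * R) < s ^ 3 * s.
  by apply: Rmult_le_0_lt_compat; nra.
by simpl; lra.
Qed.

Lemma clash_count_small (n r m : nat) : 3 <= INR r -> 100 * INR r ^ 2 < INR n ->
  100 * (INR m * INR r ^ 4) < INR n ^ 2 ->
  INR (m * ('C(r, 2) * 'C(n - 2, r - 2))) <= INR 'C(n.-1, r) / 100.
Proof.
set Rn := INR n; set R := INR r; set M := INR m; move=> R_ge3 R2_small MR4_small.
have r_lt_n : (r < n)%nat by apply/ltP; apply: INR_lt; rewrite -/R -/Rn; nra.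
have r_gt1 : (1 < r)%nat by apply/ltP; apply: INR_lt; rewrite -/R /=; lra.
have M_ge0 : 0 <= M := pos_INR m.
have C2_ge0 := pos_INR 'C(r, 2); have C'_ge0 := pos_INR 'C(n - 2, r - 2).
have N0_ge0 := pos_INR 'C(n.-1, r).
have n1R : INR n.-1 = Rn - 1 by rewrite -subn1 INR_subn; [|lia].
have r1R : INR r.-1 = R - 1 by rewrite -subn1 INR_subn; [|lia].
have pair : (Rn - 1) * (Rn - R) * INR 'C(n - 2, r - 2) = (R - 1) * R * INR 'C(n.-1, r).
  rewrite -n1R -INR_subn ?(ltnW r_lt_n) // -r1R -!INR_muln bin_pair_ratio //.
  by rewrite r_gt1 ltnW.
have C2 : 2 * INR 'C(r, 2) = R * (R - 1).
  by rewrite -r1R (_ : 2 = INR 2) // -INR_muln bin2_double INR_muln Rmult_comm.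
rewrite !INR_muln -/M.
have R_small : 100 * R < Rn by nra.
have den : Rn ^ 2 / 2 <= (Rn - 1) * (Rn - R) by simpl; nra.
have X_ge0 : 0 <= M * (INR 'C(r, 2) * INR 'C(n - 2, r - 2)).
  by apply: Rmult_le_pos => //; nra.
have key : M * (INR 'C(r, 2) * INR 'C(n - 2, r - 2)) * ((Rn - 1) * (Rn - R))
    <= Rn ^ 2 / 2 * (INR 'C(n.-1, r) / 100).
  have -> : M * (INR 'C(r, 2) * INR 'C(n - 2, r - 2)) * ((Rn - 1) * (Rn - R))
      = M * INR 'C(r, 2) * ((Rn - 1) * (Rn - R) * INR 'C(n - 2, r - 2)) by ring.
  rewrite pair (_ : INR 'C(r, 2) = R * (R - 1) / 2); last lra.
  have RR : (R * (R - 1)) ^ 2 <= R ^ 4 by simpl; nra.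
  have : M * (R * (R - 1)) ^ 2 <= M * R ^ 4 by apply: Rmult_le_compat_l.
  by simpl; nra.
have Rn2_gt0 : 0 < Rn ^ 2 / 2 by nra.
apply: (Rmult_le_reg_l (Rn ^ 2 / 2)) => //.
by rewrite Rmult_comm; apply: Rle_trans key; apply: Rmult_le_compat_l.
Qed.

Lemma switch_rate (n r m : nat) (v : 'I_n) : 3 <= INR r -> 100 * INR r ^ 2 < INR n ->
  100 * (INR m * INR r ^ 4) < INR n ^ 2 ->
  exists G : nat, [/\ (0 < G)%nat,
    forall H e, H \in Lr n r m -> e \in H -> (G <= #|switch_targets r v H e|)%nat
  & INR m * INR #|rsets_through r v| <= 3 / 2 * INR m * INR r / INR n * INR G].
Proof.
set Rn := INR n; set R := INR r; set M := INR m; move=> R_ge3 R2_small MR4_small.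
have R_3R : 3 * R <= R ^ 2 by rewrite /=; nra.
have R_small : 100 * R < Rn by lra.
have r_lt_n : (r < n)%nat by apply/ltP; apply: INR_lt; rewrite -/R -/Rn; lra.
have r_gt0 : (0 < r)%nat by apply/ltP; apply: INR_lt; rewrite -/R /=; lra.
pose N0 := 'C(n.-1, r); pose X := (m * ('C(r, 2) * 'C(n - 2, r - 2)))%nat.
have N0_gt0 : 0 < INR N0 by apply: lt_0_INR; apply/ltP; rewrite bin_gt0; lia.
have X_small : INR X <= INR N0 / 100 := clash_count_small R_ge3 R2_small MR4_small.
have X_le : (X <= #|rsets_avoiding r v|)%nat.
  by apply/leP; apply: INR_le; rewrite card_rsets_avoiding -/N0; lra.
have through : (Rn - R) * INR #|rsets_through r v| = R * INR N0.
  rewrite card_rsets_through; [|lia|lia].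
  rewrite -INR_subn ?(ltnW r_lt_n) // -!INR_muln bin_through_ratio //.
  by rewrite r_gt0 ltnW.
exists (#|rsets_avoiding r v| - X)%nat; split.
- by rewrite subn_gt0; apply/ltP; apply: INR_lt; rewrite card_rsets_avoiding -/N0; lra.
- by move=> H e HL _; apply: card_switch_targets.
rewrite INR_subn // card_rsets_avoiding -/N0 -/M -/R -/Rn.
have Nin_ge0 := pos_INR #|rsets_through r v|.
have M_ge0 : 0 <= M := pos_INR m.
have Nin_le : INR #|rsets_through r v| * Rn <= 3 / 2 * R * (INR N0 - INR X).
  have h1 : INR #|rsets_through r v| * Rn
      <= INR #|rsets_through r v| * (100 / 99 * (Rn - R)) by apply: Rmult_le_compat_l; lra.
  have h2 : R * (99 / 100 * INR N0) <= R * (INR N0 - INR X).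
    by apply: Rmult_le_compat_l; lra.
  have R_N0 : 0 <= R * INR N0 by apply: Rmult_le_pos; lra.
  lra.
have Rn_gt0 : 0 < Rn by lra.
apply: (Rmult_le_reg_r Rn) => //.
have -> : 3 / 2 * M * R / Rn * (INR N0 - INR X) * Rn = M * (3 / 2 * R * (INR N0 - INR X)).
  by field; lra.
by rewrite Rmult_assoc; apply: Rmult_le_compat_l.
Qed.

Lemma high_degree_rare (n r m : nat) (v : 'I_n) (k : nat) :
  3 <= INR r -> 100 * INR r ^ 2 < INR n -> 100 * (INR m * INR r ^ 4) < INR n ^ 2 ->
  INR n / INR r ^ 2 <= exp (INR k) -> 81 * INR r ^ 2 * INR m / INR n <= INR k ->
  INR #|deg_at_least r m v k| <= 9 * (INR r ^ 6 / INR n ^ 4) * INR #|Lr n r m|.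
Proof.
move=> R_ge3 R2_small MR4_small y_le k_ge.
have [G [G_gt0 targets rate]] := switch_rate v R_ge3 R2_small MR4_small.
have r_gt1 : (1 < r)%nat by apply/ltP; apply: INR_lt; rewrite /=; lra.
have Rn_gt0 : 0 < INR n by nra.
have G_pos : 0 < INR G by apply: lt_0_INR; apply/ltP.
pose lam := 3 / 2 * INR m * INR r / INR n.
have lam_ge0 : 0 <= lam.
  apply: Rmult_le_pos; last exact/Rlt_le/Rinv_0_lt_compat.
  by apply: Rmult_le_pos; [apply: Rmult_le_pos; [lra | apply: pos_INR] | lra].
have step j :
    INR #|deg_at_least r m v j.+1| * INR j.+1 <= lam * INR #|deg_at_least r m v j|.
  have := switch_count r_gt1 j targets; move/leP/le_INR; rewrite !INR_muln => count.
  apply: (Rmult_le_reg_r (INR G)) => //; apply: Rle_trans count _.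
  have B_ge0 := pos_INR #|deg_at_least r m v j|.
  by rewrite Rmult_assoc [lam * _]Rmult_comm Rmult_assoc; apply: Rmult_le_compat_l.
have decay := factorial_decay lam_ge0 step k.
have B0 : deg_at_least r m v 0 = Lr n r m by apply/setP => H; rewrite inE andbT.
rewrite B0 in decay; apply: Rle_trans decay _.
apply: Rmult_le_compat_r; first exact: pos_INR.
have R2_gt0 : 0 < INR r ^ 2 by nra.
apply: Rle_trans (poisson_tail lam_ge0 R_ge3 _ y_le _) _.
- by apply: (Rmult_le_reg_r (INR r ^ 2)) => //; rewrite /Rdiv Rmult_assoc Rinv_l; lra.
- by apply: Rle_trans k_ge; right; rewrite /lam; field; lra.
- by right; field; lra.
Qed.

Lemma Rceil_ge (x : R) : x <= IZR (Rceil x).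
Proof. by rewrite /Rceil opp_IZR minus_IZR; have [_] := archimed (- x); lra. Qed.

Lemma INR_sum_le (n : nat) (f : 'I_n -> nat) (c : R) :
  (forall i, INR (f i) <= c) -> INR (\sum_i f i) <= INR n * c.
Proof.
move=> f_le; rewrite -[in INR n](card_ord n) -sum1_card.
elim/big_rec2: _ => [|i s t _ IH]; first by rewrite Rmult_0_l; apply: Rle_refl.
by rewrite -!plusE !plus_INR Rmult_plus_distr_r Rmult_1_l; apply: Rplus_le_compat.
Qed.

Lemma threshold_properties (n r m : nat) : 3 <= INR r -> 100 * INR r ^ 2 < INR n ->
  [/\ (0 <= M0star n r m)%Z,
      INR n / INR r ^ 2 <= exp (INR (Z.to_nat (M0star n r m)).+1)
    & 81 * INR r ^ 2 * INR m / INR n <= INR (Z.to_nat (M0star n r m)).+1].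
Proof.
move=> R_ge3 R2_small.
have M0_ge : ln (INR n / INR r ^ 2) + 3 ^ 4 * INR r ^ 2 * INR m / INR n
    <= IZR (M0star n r m) := Rceil_ge _.
have y_ge100 : 100 <= INR n / INR r ^ 2.
  by apply: (Rmult_le_reg_r (INR r ^ 2)); [nra | rewrite /Rdiv Rmult_assoc Rinv_l; nra].
have ln_y_gt0 : 0 < ln (INR n / INR r ^ 2) by rewrite -ln_1; apply: ln_increasing; lra.
have m_term_ge0 : 0 <= 3 ^ 4 * INR r ^ 2 * INR m / INR n.
  apply: Rmult_le_pos; last by apply/Rlt_le/Rinv_0_lt_compat; nra.
  by apply: Rmult_le_pos; [nra | apply: pos_INR].
have M0_ge0 : (0 <= M0star n r m)%Z by apply: le_IZR; lra.
have k_eq : INR (Z.to_nat (M0star n r m)).+1 = IZR (M0star n r m) + 1.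
  by rewrite S_INR INR_IZR_INZ Z2Nat.id.
split => //; rewrite k_eq; last by rewrite (_ : 81 = 3 ^ 4); [lra | ring].
rewrite -[X in X <= _]exp_ln; last lra.
by apply/Rlt_le/exp_increasing; lra.
Qed.

Theorem theorem4p1 (r m : nat -> nat)
  (hr : forall n, (3 <= r n)%coq_nat)
  (hlow : forall n, (INR n / (INR (r n) ^ 2) <= INR (m n))%R)
  (hup : Un_cv (fun n => (INR (m n) * INR (r n) ^ 3 / (sqrt (INR n) ^ 3))%R) 0%R) :
  exists (C : R) (N : nat), forall n, (N <= n)%coq_nat ->
    (INR #|Lr n (r n) (m n)| - INR #|Lr_good n (r n) (m n)|
       <= C * (INR (r n) ^ 6 / INR n ^ 3) * INR #|Lr n (r n) (m n)|)%R.
Proof.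
have [N hN] := hup (1 / 10) ltac:(lra).
exists 9, (maxn N 1) => n /leP; rewrite geq_max => /andP [/leP n_geN /leP n_ge1].
have [small _] := Rabs_def2 _ _ (hN n n_geN); rewrite Rminus_0_r in small.
have Rn_ge1 : 1 <= INR n by have := le_INR _ _ n_ge1; rewrite [INR 1]/=.
have R_ge3 : 3 <= INR (r n) by have := le_INR _ _ (hr n); rewrite [INR 3]/=; lra.
have [R2_small MR4_small] := sparse_regime Rn_ge1 R_ge3 (hlow n) small.
have [M0_ge0 y_le k_ge] := threshold_properties (m n) R_ge3 R2_small.
have vertex v := high_degree_rare v R_ge3 R2_small MR4_small y_le k_ge.
rewrite -INR_subn; last exact/subset_leq_card/Lr_good_sub.
apply: Rle_trans (le_INR _ _ (leP (card_not_good_le M0_ge0))) _.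
apply: Rle_trans (INR_sum_le vertex) _.
by right; field; lra.
Qed.
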